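(* Let $\alpha\ge\omega$. Then: (i) there are non-isomorphic representable cylindric algebras of dimension $\alpha$ each of which is a generating subreduct of the same $(\alpha+\omega)$-dimensional cylindric algebra; (ii) there exist $\mathfrak{A}\in\mathrm{RCA}_\alpha$, $\mathfrak{B}\in\mathrm{CA}_{\alpha+\omega}$ and an ideal $J\subseteq\mathfrak{B}$ such that $\mathfrak{A}\subseteq\mathrm{Nr}_\alpha\mathfrak{B}$, $A$ generates $\mathfrak{B}$, but $\mathrm{Ig}^{\mathfrak{B}}(J\cap A)\neq J$; (iii) there exist $\mathfrak{A},\mathfrak{A}'\in\mathrm{RCA}_\alpha$, $\mathfrak{B},\mathfrak{B}'\in\mathrm{CA}_{\alpha+\omega}$, embeddings $e_A:\mathfrak{A}\to\mathrm{Nr}_\alpha\mathfrak{B}$ and $e_{A'}:\mathfrak{A}'\to\mathrm{Nr}_\alpha\mathfrak{B}'$ with $\mathrm{Sg}^{\mathfrak{B}}e_A(A)=\mathfrak{B}$ and $\mathrm{Sg}^{\mathfrak{B}'}e_{A'}(A')=\mathfrak{B}'$, and an isomorphism $i:\mathfrak{A}\to\mathfrak{A}'$ for which there is no isomorphism $\bar i:\mathfrak{B}\to\mathfrak{B}'$ with $\bar i\circ e_A=e_{A'}\circ i$.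
   Context: $\mathrm{CA}_\beta$ is the class of cylindric algebras of dimension $\beta$ (Boolean algebras with ${\sf c}_i$, ${\sf d}_{ij}$, $i,j<\beta$, satisfying Tarski's axioms); $\mathrm{RCA}_\alpha$ those isomorphic to subdirect products of cylindric set algebras of dimension $\alpha$. For $\mathfrak{B}\in\mathrm{CA}_\beta$ and $\alpha<\beta$, $\mathrm{Nr}_\alpha\mathfrak{B}$ is the $\mathrm{CA}_\alpha$ with universe $\{x\in B:{\sf c}_ix=x\ \forall i\in\beta\setminus\alpha\}$ and the operations indexed below $\alpha$. $\mathfrak{A}$ is a generating subreduct of $\mathfrak{B}$ if $\mathfrak{A}\subseteq\mathrm{Nr}_\alpha\mathfrak{B}$ is a subalgebra and $A$ generates $\mathfrak{B}$. $\mathrm{Sg}^{\mathfrak{B}}X$ and $\mathrm{Ig}^{\mathfrak{B}}X$ denote the subalgebra and the (cylindric) ideal of $\mathfrak{B}$ generated by $X$. *)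

Set Implicit Arguments.
Unset Implicit Arguments.
Unset Strict Implicit.

Record CAType (I : Type) := MkCA {
  car :> Type;
  join : car -> car -> car;
  meet : car -> car -> car;
  compl : car -> car;
  zero : car;
  one : car;
  cyl : I -> car -> car;
  diag : I -> I -> car
}.

Arguments join {I} _ _ _.
Arguments meet {I} _ _ _.
Arguments compl {I} _ _.
Arguments zero {I} _.
Arguments one {I} _.
Arguments cyl {I} _ _ _.
Arguments diag {I} _ _ _.

Definition leq {I} (A : CAType I) (x y : A) : Prop := meet A x y = x.

(* Tarski's axioms for CA_I (Henkin–Monk–Tarski, Def. 1.1.1). *)
Definition is_CA {I : Type} (A : CAType I) : Prop :=
  (forall x y, join A x y = join A y x) /\
  (forall x y, meet A x y = meet A y x) /\
  (forall x y z, join A x (join A y z) = join A (join A x y) z) /\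
  (forall x y z, meet A x (meet A y z) = meet A (meet A x y) z) /\
  (forall x y, join A x (meet A x y) = x) /\
  (forall x y, meet A x (join A x y) = x) /\
  (forall x y z, meet A x (join A y z) = join A (meet A x y) (meet A x z)) /\
  (forall x, join A x (compl A x) = one A) /\
  (forall x, meet A x (compl A x) = zero A) /\
  (forall i, cyl A i (zero A) = zero A) /\
  (forall i x, join A x (cyl A i x) = cyl A i x) /\
  (forall i x y, cyl A i (meet A x (cyl A i y)) = meet A (cyl A i x) (cyl A i y)) /\
  (forall i j x, cyl A i (cyl A j x) = cyl A j (cyl A i x)) /\
  (forall i, diag A i i = one A) /\
  (forall i j k, k <> i -> k <> j ->
                 diag A i j = cyl A k (meet A (diag A i k) (diag A k j))) /\
  (forall i j x, i <> j ->
                 meet A (cyl A i (meet A (diag A i j) x))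
                        (cyl A i (meet A (diag A i j) (compl A x))) = zero A).

(* f : A -> B is a homomorphism from A to the r-reduct of B, i.e. it preserves
   the Boolean operations and sends c_i, d_ij to c_(r i), d_(r i)(r j). *)
Definition hom_r {I J : Type} (r : I -> J) (A : CAType I) (B : CAType J)
  (f : A -> B) : Prop :=
  (forall x y, f (join A x y) = join B (f x) (f y)) /\
  (forall x y, f (meet A x y) = meet B (f x) (f y)) /\
  (forall x, f (compl A x) = compl B (f x)) /\
  f (zero A) = zero B /\
  f (one A) = one B /\
  (forall i x, f (cyl A i x) = cyl B (r i) (f x)) /\
  (forall i j, f (diag A i j) = diag B (r i) (r j)).

Definition hom {I : Type} (A B : CAType I) (f : A -> B) : Prop :=
  hom_r (fun i => i) A B f.

Definition injective {X Y : Type} (f : X -> Y) : Prop :=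
  forall x y, f x = f y -> x = y.
Definition surjective {X Y : Type} (f : X -> Y) : Prop :=
  forall y, exists x, f x = y.

Definition iso {I : Type} (A B : CAType I) (f : A -> B) : Prop :=
  hom A B f /\ injective f /\ surjective f.

Definition isomorphic {I : Type} (A B : CAType I) : Prop :=
  exists f : A -> B, iso A B f.

Definition set_cyl {I U : Type} (i : I) (X : (I -> U) -> Prop) : (I -> U) -> Prop :=
  fun s => exists t, X t /\ forall j, j <> i -> t j = s j.

Definition fullCs (I U : Type) : CAType I :=
  @MkCA I ((I -> U) -> Prop)
    (fun X Y s => X s \/ Y s)
    (fun X Y s => X s /\ Y s)
    (fun X s => ~ X s)
    (fun _ => False)
    (fun _ => True)
    (fun i X => set_cyl i X)
    (fun i j s => s i = s j).

Definition subuniverse {I : Type} (A : CAType I) (S : A -> Prop) : Prop :=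
  (forall x y, S x -> S y -> S (join A x y)) /\
  (forall x y, S x -> S y -> S (meet A x y)) /\
  (forall x, S x -> S (compl A x)) /\
  S (zero A) /\ S (one A) /\
  (forall i x, S x -> S (cyl A i x)) /\
  (forall i j, S (diag A i j)).

Definition prodCs (I K : Type) (U : K -> Type) : CAType I :=
  @MkCA I (forall k, (I -> U k) -> Prop)
    (fun X Y k => join (fullCs I (U k)) (X k) (Y k))
    (fun X Y k => meet (fullCs I (U k)) (X k) (Y k))
    (fun X k => compl (fullCs I (U k)) (X k))
    (fun k => zero (fullCs I (U k)))
    (fun k => one (fullCs I (U k)))
    (fun i X k => cyl (fullCs I (U k)) i (X k))
    (fun i j k => diag (fullCs I (U k)) i j).

(* RCA_I: A is isomorphic to a subdirect product of cylindric set algebras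
   (the Cs's being the subalgebras S k of full set algebras with bases U k):
   there is an injective homomorphism into the product of the S k whose
   composition with every projection is onto S k. *)
Definition is_RCA {I : Type} (A : CAType I) : Prop :=
  exists (K : Type) (U : K -> Type) (S : forall k, ((I -> U k) -> Prop) -> Prop)
         (h : A -> prodCs I K U),
    (forall k, subuniverse (fullCs I (U k)) (S k)) /\
    hom A (prodCs I K U) h /\ injective h /\
    (forall x k, S k (h x k)) /\
    (forall k X, S k X -> exists x, h x k = X).

(* Neat reduct: A embeds (as a subalgebra) into Nr_I B, where B has
   dimension I + nat (i.e. alpha + omega) and I sits as the initial part. *)
Definition embeds_Nr {I : Type} (A : CAType I) (B : CAType (I + nat)) (e : A -> B)
  : Prop :=
  hom_r inl A B e /\ injective e /\
  (forall x n, cyl B (inr n) (e x) = e x).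

Definition generates {I : Type} (B : CAType I) (X : B -> Prop) : Prop :=
  forall S : B -> Prop, subuniverse B S -> (forall x, X x -> S x) -> forall b, S b.

Definition is_ideal {I : Type} (B : CAType I) (J : B -> Prop) : Prop :=
  J (zero B) /\
  (forall x y, J x -> J y -> J (join B x y)) /\
  (forall x y, leq B x y -> J y -> J x) /\
  (forall i x, J x -> J (cyl B i x)).

Definition Ig {I : Type} (B : CAType I) (X : B -> Prop) : B -> Prop :=
  fun b => forall J, is_ideal B J -> (forall x, X x -> J x) -> J b.

Definition gen_subreduct {I : Type} (A : CAType I) (B : CAType (I + nat)) (e : A -> B)
  : Prop :=
  embeds_Nr A B e /\ generates B (fun b => exists a, e a = b).

(** Fix a copy [f : nat -> I] of [omega] in [I] and let [shift] move [f n] to [f (S n)].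
    The points [I -> I] that differ finitely from the identity, resp. from [shift], form
    two weak spaces.  [A] consists of the sets whose trace on these two spaces depends
    only on the type of a point over finitely many coordinates (which values coincide,
    which recur outside, whether some value repeats outside).  A back-and-forth argument
    shows that these sets form a subalgebra, and a type over finitely many coordinates is
    realized in both weak spaces; so no nonzero element of [A] lives in the shift space
    alone, and the finite variants of any element of [A] are again in [A].

    [B] is generated by the neat embedding of [A].  With one spare dimension the term
    "the point is injective and one coordinate can be changed keeping it injective"
    carves out the injective points of the shift space: a nonzero element of the ideal
    of elements living on the shift space, although that ideal meets [A] only in zero
    (ii).  Embedding
    [A] after twisting the shift space by a permutation of [I] sends the same term to
    zero, so no isomorphism of the generated algebras is compatible with the embeddings
    (iii).  Finally every element of [B] is blind to the shift of a late tail of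
    coordinates; hence the full neat reduct of [B] contains the injective points of the
    two spaces as elements that no zero-dimensional element separates, whereas in [A]
    the finite variants of an element always separate it, so [A] and the neat reduct
    are not isomorphic (i). *)

From Stdlib Require Import Classical ClassicalEpsilon FunctionalExtensionality
  PropExtensionality ProofIrrelevance List FinFun Arith Lia.
Import ListNotations.

Definition dec (P : Prop) : {P} + {~ P} := excluded_middle_informative P.

Definition eq_dec_classic {X : Type} (x y : X) : {x = y} + {x <> y} := dec (x = y).

Definition upd {T U : Type} (s : T -> U) (k : T) (v : U) : T -> U :=
  fun c => if dec (c = k) then v else s c.

Lemma upd_eq {T U} (s : T -> U) k v : upd s k v k = v.
Proof. unfold upd. destruct (dec (k = k)); congruence. Qed.

Lemma upd_neq {T U} (s : T -> U) k v c : c <> k -> upd s k v c = s c.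
Proof. intros H. unfold upd. destruct (dec (c = k)); congruence. Qed.

Lemma upd_agree {T U} (t s : T -> U) i :
  (forall j, j <> i -> t j = s j) -> t = upd s i (t i).
Proof.
  intros H. apply functional_extensionality. intro c.
  destruct (classic (c = i)) as [->|Hc]; [rewrite upd_eq|rewrite upd_neq]; auto.
Qed.

Lemma upd_closed_variant {T U : Type} (Z : (T -> U) -> Prop) :
  (forall r i u, Z r -> Z (upd r i u)) ->
  forall L p q, Z p -> (forall k, ~ In k L -> q k = p k) -> Z q.
Proof.
  intros HZ L. induction L as [|x L IH]; intros p q Hp Hq.
  - replace q with p; auto. apply functional_extensionality; intro k. symmetry. now apply Hq.
  - apply (IH (upd p x (q x))); auto. intros k Hk. destruct (classic (k = x)) as [->|Hkx].
    + now rewrite upd_eq.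
    + rewrite upd_neq; auto. apply Hq. intros [E|E]; auto.
Qed.

Lemma not_surjective_missing {X Y : Type} (r : X -> Y) :
  ~ surjective r -> exists v, forall k, r k <> v.
Proof.
  intros Hr. apply not_all_ex_not in Hr as [v Hv]. exists v. intros k E. apply Hv. eauto.
Qed.

Lemma set_ext {S : Type} (X Y : S -> Prop) : (forall s, X s <-> Y s) -> X = Y.
Proof.
  intros H. apply functional_extensionality. intro s. apply propositional_extensionality. auto.
Qed.

Section SetCylindrification.
Context {T U : Type}.

Lemma set_cyl_comm_sub (i j : T) (X : (T -> U) -> Prop) s :
  set_cyl i (set_cyl j X) s -> set_cyl j (set_cyl i X) s.
Proof.
  intros [t [[t' [Hx E']] E]]. exists (upd s j (t' j)). split.
  - exists t'. split; auto. intros c Hc. destruct (dec (c = j)) as [->|Hcj].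
    + now rewrite upd_eq.
    + rewrite upd_neq, E', E; auto.
  - intros c Hc. now rewrite upd_neq.
Qed.

Lemma set_cyl_meet_cyl (i : T) (X Y : (T -> U) -> Prop) s :
  set_cyl i (fun t => X t /\ set_cyl i Y t) s <-> set_cyl i X s /\ set_cyl i Y s.
Proof.
  split.
  - intros [t [[Hx [t' [Hy Ht']]] Ht]]. split; [exists t; auto|].
    exists t'. split; auto. intros j Hj. rewrite Ht', Ht; auto.
  - intros [[t1 [H1 E1]] [t2 [H2 E2]]]. exists t1. split; [split; auto|auto].
    exists t2. split; auto. intros c Hc. rewrite E2, E1; auto.
Qed.

Lemma set_diag_cyl (i j k : T) s : k <> i -> k <> j ->
  s i = s j <-> set_cyl k (fun t : T -> U => t i = t k /\ t k = t j) s.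
Proof.
  intros Hi Hj. split.
  - intros E. exists (upd s k (s i)). rewrite upd_eq, !upd_neq by auto.
    split; auto. intros c Hc. now rewrite upd_neq.
  - intros [t [[E1 E2] E]]. rewrite <- (E i), <- (E j) by auto. congruence.
Qed.

Lemma set_cyl_diag_disjoint (i j : T) (X : (T -> U) -> Prop) s : i <> j ->
  ~ (set_cyl i (fun t => t i = t j /\ X t) s /\ set_cyl i (fun t => t i = t j /\ ~ X t) s).
Proof.
  intros Hij [[t1 [[D1 X1] E1]] [t2 [[D2 X2] E2]]].
  assert (t1 = t2) as <-; [|contradiction].
  apply functional_extensionality. intro c. destruct (dec (c = i)) as [->|Hc].
  - rewrite D1, D2, E1, E2; auto.
  - rewrite E1, E2; auto.
Qed.

End SetCylindrification.

Lemma fullCs_is_CA (T U : Type) : is_CA (fullCs T U).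
Proof.
  repeat split; intros; apply set_ext; intro s; simpl.
  all: try tauto.
  - split; [intros [t [[] _]]|contradiction].
  - split; [intros [Hs|Hs]|intros Hs; right]; auto. exists s. auto.
  - apply set_cyl_meet_cyl.
  - split; apply set_cyl_comm_sub.
  - now apply set_diag_cyl.
  - split; [|contradiction]. now apply set_cyl_diag_disjoint.
Qed.

Section Subalgebra.
Context {T : Type} (C : CAType T) (P : C -> Prop) (HP : subuniverse C P).

Definition SubCA : CAType T :=
  @MkCA T {x : C | P x}
    (fun x y => exist _ (join C (proj1_sig x) (proj1_sig y))
                  (proj1 HP _ _ (proj2_sig x) (proj2_sig y)))
    (fun x y => exist _ (meet C (proj1_sig x) (proj1_sig y))
                  (proj1 (proj2 HP) _ _ (proj2_sig x) (proj2_sig y)))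
    (fun x => exist _ (compl C (proj1_sig x)) (proj1 (proj2 (proj2 HP)) _ (proj2_sig x)))
    (exist _ (zero C) (proj1 (proj2 (proj2 (proj2 HP)))))
    (exist _ (one C) (proj1 (proj2 (proj2 (proj2 (proj2 HP))))))
    (fun i x => exist _ (cyl C i (proj1_sig x))
                  (proj1 (proj2 (proj2 (proj2 (proj2 (proj2 HP))))) i _ (proj2_sig x)))
    (fun i j => exist _ (diag C i j) (proj2 (proj2 (proj2 (proj2 (proj2 (proj2 HP))))) i j)).

Definition sval (x : SubCA) : C := proj1_sig (x : {x : C | P x}).

Definition smk (c : C) (pc : P c) : SubCA := exist _ c pc.

Lemma sval_inj : injective sval.
Proof.
  intros [x px] [y py]. unfold sval. simpl. intros <-. f_equal. apply proof_irrelevance.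
Qed.

Lemma sval_P x : P (sval x).
Proof. exact (proj2_sig x). Qed.

Lemma sval_hom : hom SubCA C sval.
Proof. repeat split. Qed.

Lemma SubCA_is_CA : is_CA C -> is_CA SubCA.
Proof.
  intros (A1 & A2 & A3 & A4 & A5 & A6 & A7 & A8 & A9 & C1 & C2 & C3 & C4 & C5 & C6 & C7).
  repeat split; intros; apply sval_inj; simpl; auto.
Qed.

End Subalgebra.

Lemma subalgebra_fullCs_is_RCA (T U : Type) (P : fullCs T U -> Prop)
  (HP : subuniverse (fullCs T U) P) : is_RCA (SubCA (fullCs T U) P HP).
Proof.
  exists unit, (fun _ => U), (fun _ => P), (fun x _ => sval _ P HP x).
  split; [intros; exact HP|]. split; [repeat split|]. split; [|split].
  - intros x y E. apply sval_inj. exact (f_equal (fun g => g tt) E).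
  - intros x k. apply sval_P.
  - intros [] X HX. now exists (smk _ P HP X HX).
Qed.

Lemma zero_ideal_set_subalgebra {T U : Type} (P : fullCs T U -> Prop)
  (HP : subuniverse (fullCs T U) P) :
  is_ideal (SubCA (fullCs T U) P HP) (fun b => b = zero _).
Proof.
  split; [|split; [|split]]; intros; subst; apply sval_inj; simpl; apply set_ext; intros s.
  - tauto.
  - tauto.
  - unfold leq in H. rewrite <- H. simpl. tauto.
  - split; [intros [t [[] _]]|contradiction].
Qed.

Section Generated.
Context {T U : Type} (G : ((T -> U) -> Prop) -> Prop).

Inductive Gen : ((T -> U) -> Prop) -> Prop :=
| Gen_base x : G x -> Gen x
| Gen_join x y : Gen x -> Gen y -> Gen (join (fullCs T U) x y)
| Gen_meet x y : Gen x -> Gen y -> Gen (meet (fullCs T U) x y)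
| Gen_compl x : Gen x -> Gen (compl (fullCs T U) x)
| Gen_zero : Gen (zero (fullCs T U))
| Gen_one : Gen (one (fullCs T U))
| Gen_cyl i x : Gen x -> Gen (cyl (fullCs T U) i x)
| Gen_diag i j : Gen (diag (fullCs T U) i j).

Lemma Gen_subuniverse : subuniverse (fullCs T U) Gen.
Proof. repeat split; intros; now constructor. Qed.

Definition SgCA : CAType T := SubCA (fullCs T U) Gen Gen_subuniverse.

Lemma SgCA_is_CA : is_CA SgCA.
Proof. apply SubCA_is_CA, fullCs_is_CA. Qed.

Lemma SgCA_generates (X : SgCA -> Prop) :
  (forall b, G b -> exists x, X x /\ sval _ _ _ x = b) -> generates SgCA X.
Proof.
  intros HX S (Sj & Sm & Sc & S0 & S1 & Scy & Sd) HXS b0.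
  enough (K : forall v, Gen v -> forall b : SgCA, sval _ _ _ b = v -> S b)
    by exact (K _ (sval_P _ _ _ b0) b0 eq_refl).
  set (mk := smk (fullCs T U) Gen Gen_subuniverse).
  induction 1; intros b Eb.
  - destruct (HX x H) as [x' [Hx' E']].
    replace b with x' by (apply sval_inj; congruence). auto.
  - replace b with (join SgCA (mk x H) (mk y H0)) by (now apply sval_inj).
    apply Sj; [apply IHGen1|apply IHGen2]; reflexivity.
  - replace b with (meet SgCA (mk x H) (mk y H0)) by (now apply sval_inj).
    apply Sm; [apply IHGen1|apply IHGen2]; reflexivity.
  - replace b with (compl SgCA (mk x H)) by (now apply sval_inj).
    apply Sc, IHGen. reflexivity.
  - replace b with (zero SgCA) by (now apply sval_inj). auto.
  - replace b with (one SgCA) by (now apply sval_inj). auto.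
  - replace b with (cyl SgCA i (mk x H)) by (now apply sval_inj).
    apply Scy, IHGen. reflexivity.
  - replace b with (diag SgCA i j) by (now apply sval_inj). auto.
Qed.

End Generated.

Lemma hom_comp {T : Type} (A B C : CAType T) (f : A -> B) (g : B -> C) :
  hom A B f -> hom B C g -> hom A C (fun x => g (f x)).
Proof.
  intros (Fj & Fm & Fc & F0 & F1 & Fcy & Fd) (Gj & Gm & Gc & G0 & G1 & Gcy & Gd).
  repeat split; intros; congruence.
Qed.

Lemma iso_id {T : Type} (A : CAType T) : iso A A (fun x => x).
Proof. split; [repeat split|split]; [intros x y E; exact E|intros y; now exists y]. Qed.

(** * Neat embeddings *)

Section NeatEmbedding.
Context {T U : Type}.

Definition nr_embed (X : (T -> U) -> Prop) : (T + nat -> U) -> Prop :=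
  fun s => X (fun i => s (inl i)).

Lemma nr_embed_hom : hom_r inl (fullCs T U) (fullCs (T + nat) U) nr_embed.
Proof.
  repeat split; intros. apply set_ext; intro s. unfold nr_embed; simpl. split.
  - intros [t [Ht Et]]. exists (fun c => match c with inl j => t j | inr n => s (inr n) end).
    split; auto. intros [j|n] Hj; auto. apply Et. congruence.
  - intros [t [Ht Et]]. exists (fun j => t (inl j)). split; auto.
    intros j Hj. apply Et. congruence.
Qed.

Lemma nr_embed_cyl_inr X n : set_cyl (inr n) (nr_embed X) = nr_embed X.
Proof.
  apply set_ext; intro s. unfold nr_embed. split.
  - intros [t [Ht Et]]. replace (fun i => s (inl i)) with (fun i => t (inl i)); auto.
    apply functional_extensionality; intro j. apply Et. discriminate.
  - intros H. exists s. auto.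
Qed.

Lemma nr_embed_inj (u : U) : injective nr_embed.
Proof.
  intros X Y E. apply functional_extensionality; intro r.
  exact (f_equal (fun F => F (fun c => match c with inl i => r i | inr _ => u end)) E).
Qed.

Lemma embeds_Nr_SgCA (u : U) (D : CAType T) (phi : D -> fullCs T U)
  (G : ((T + nat -> U) -> Prop) -> Prop) (emb : D -> SgCA G) :
  hom D (fullCs T U) phi -> injective phi ->
  (forall x, sval _ _ _ (emb x) = nr_embed (phi x)) -> embeds_Nr D (SgCA G) emb.
Proof.
  intros (Dj & Dm & Dc & D0 & D1 & Dcy & Dd) Hinj Hemb.
  destruct nr_embed_hom as (Ej & Em & Ec & E0 & E1 & Ecy & Ed).
  split; [|split].
  - repeat split; intros; apply sval_inj; rewrite Hemb;
      rewrite ?Dj, ?Dm, ?Dc, ?D0, ?D1, ?Dcy, ?Dd, ?Ej, ?Em, ?Ec, ?E0, ?E1, ?Ecy, ?Ed, <- ?Hemb;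
      reflexivity.
  - intros x y E. apply Hinj, (nr_embed_inj u). rewrite <- !Hemb. now f_equal.
  - intros x n. apply sval_inj.
    change (set_cyl (inr n) (sval _ _ _ (emb x)) = sval _ _ _ (emb x)).
    rewrite Hemb. apply nr_embed_cyl_inr.
Qed.

End NeatEmbedding.

(** [varies D i z]: the points of [z] whose [i]-th coordinate can be changed to a
    different value without leaving [z]; the spare dimension [inr 0] stores the old value. *)
Definition varies {T : Type} (D : CAType (T + nat)) (i : T) (z : D) : D :=
  meet D z (cyl D (inr 0) (meet D (diag D (inr 0) (inl i))
    (cyl D (inl i) (meet D (compl D (diag D (inl i) (inr 0))) z)))).

Lemma hom_varies {T : Type} (D D' : CAType (T + nat)) (h : D -> D') i z :
  hom D D' h -> h (varies D i z) = varies D' i (h z).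
Proof.
  intros (Hj & Hm & Hc & H0 & H1 & Hcy & Hd). unfold varies.
  rewrite Hm, Hcy, Hm, Hd, Hcy, Hm, Hc, Hd. reflexivity.
Qed.

Lemma varies_nr_embed {T U : Type} (i : T) (X : (T -> U) -> Prop) s :
  varies (fullCs (T + nat) U) i (nr_embed X) s <->
  X (fun j => s (inl j)) /\ exists u, u <> s (inl i) /\ X (upd (fun j => s (inl j)) i u).
Proof.
  assert (Hne : inl i <> (inr 0 : T + nat)) by discriminate.
  assert (Hupd : forall (t : T + nat -> U) u,
    (fun j => upd t (inl i) u (inl j)) = upd (fun j => t (inl j)) i u).
  { intros t u. apply functional_extensionality. intro j.
    destruct (classic (j = i)) as [->|Hj]; [rewrite !upd_eq|rewrite !upd_neq]; congruence. }
  unfold varies, nr_embed; simpl. split.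
  - intros [Hz [t1 [[E1 [t2 [[N2 Z2] E2]]] E1']]]. split; auto.
    exists (t2 (inl i)). split.
    + intro E. apply N2. rewrite E, E2, E1, E1'; auto.
    + replace (upd (fun j => s (inl j)) i (t2 (inl i))) with (fun j => t2 (inl j)); auto.
      apply functional_extensionality. intro j.
      destruct (classic (j = i)) as [->|Hj]; [now rewrite upd_eq|].
      rewrite upd_neq, E2, E1'; congruence.
  - intros [Hz [u [Hu Zu]]]. split; auto.
    exists (upd s (inr 0) (s (inl i))). split.
    + rewrite upd_eq, upd_neq by auto. split; auto.
      exists (upd (upd s (inr 0) (s (inl i))) (inl i) u). split.
      * rewrite upd_eq, upd_neq, upd_eq, Hupd by auto.
        replace (fun j => upd s (inr 0) (s (inl i)) (inl j)) with (fun j => s (inl j)); auto.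
        apply functional_extensionality. intro j. now rewrite upd_neq.
      * intros c Hc. now apply upd_neq.
    + intros c Hc. now apply upd_neq.
Qed.

(** * Zero-dimensional separation *)

Definition cyl_list {T : Type} (D : CAType T) (L : list T) (x : D) : D :=
  fold_right (cyl D) x L.

Definition zd_separation {T : Type} (D : CAType T) : Prop :=
  forall w1 w2 : D, w1 <> zero D -> w2 <> zero D ->
    (forall L, meet D (cyl_list D L w1) (cyl_list D L w2) = zero D) ->
    exists z, (forall i, cyl D i z = z) /\ leq D w1 z /\ meet D w2 z = zero D.

Lemma zd_separation_iso {T : Type} (D D' : CAType T) (phi : D -> D') :
  iso D D' phi -> zd_separation D -> zd_separation D'.
Proof.
  intros [(Hj & Hm & Hc & H0 & H1 & Hcy & Hd) [Hinj Hsur]] HD w1' w2' N1 N2 Sep.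
  destruct (Hsur w1') as [w1 <-]. destruct (Hsur w2') as [w2 <-].
  assert (HL : forall L x, phi (cyl_list D L x) = cyl_list D' L (phi x)).
  { induction L; intros; simpl; auto. now rewrite Hcy, IHL. }
  destruct (HD w1 w2) as [z (Z1 & Z2 & Z3)].
  - intros ->. auto.
  - intros ->. auto.
  - intros L. apply Hinj. rewrite Hm, !HL, H0. apply Sep.
  - exists (phi z). unfold leq in *. repeat split.
    + intros i. now rewrite <- Hcy, Z1.
    + now rewrite <- Hm, Z2.
    + now rewrite <- Hm, Z3.
Qed.

Definition set_cyl_list {T U : Type} (L : list T) (X : (T -> U) -> Prop) : (T -> U) -> Prop :=
  fold_right set_cyl X L.

Lemma sval_cyl_list {T U : Type} (P : fullCs T U -> Prop) (HP : subuniverse (fullCs T U) P)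
  (L : list T) (x : SubCA (fullCs T U) P HP) :
  sval _ P HP (cyl_list _ L x) = set_cyl_list L (sval _ _ _ x).
Proof. induction L as [|a L IH]; [reflexivity|]. simpl. now rewrite <- IH. Qed.

Lemma set_cyl_list_variant {T U : Type} (L : list T) (X : (T -> U) -> Prop) p q :
  X p -> (forall k, ~ In k L -> q k = p k) -> set_cyl_list L X q.
Proof.
  revert q. induction L as [|x L IH]; intros q Hp Hq; simpl.
  - replace q with p; auto. apply functional_extensionality; intro k. symmetry. now apply Hq.
  - exists (upd q x (p x)). split.
    + apply IH; auto. intros k Hk. destruct (classic (k = x)) as [->|Hkx].
      * apply upd_eq.
      * rewrite upd_neq; auto. apply Hq. intros [E|E]; auto.
    + intros j Hj. now apply upd_neq.
Qed.




(** * Two weak spaces *)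

Section WeakSpaces.
Variable I : Type.
Variable f : nat -> I.
Hypothesis f_inj : injective f.

Lemma f_cases (i : I) : (exists n, f n = i) \/ (forall n, f n <> i).
Proof.
  destruct (classic (exists n, f n = i)) as [H|H]; [left|right]; auto.
  intros n E. apply H. eauto.
Qed.

Definition finv (i : I) : option nat :=
  match dec (exists n, f n = i) with
  | left p => Some (proj1_sig (constructive_indefinite_description _ p))
  | right _ => None
  end.

Lemma finv_Some i n : finv i = Some n -> f n = i.
Proof.
  unfold finv. destruct (dec _) as [p|p]; [|discriminate].
  destruct (constructive_indefinite_description _ p) as [m Hm]. simpl. congruence.
Qed.

Lemma finv_f n : finv (f n) = Some n.
Proof.
  destruct (finv (f n)) eqn:E.
  - apply finv_Some, f_inj in E. congruence.
  - unfold finv in E. destruct (dec _) as [p|p]; [discriminate|]. exfalso. eauto.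
Qed.

Lemma finv_None i : (forall n, f n <> i) -> finv i = None.
Proof.
  intros H. destruct (finv i) eqn:E; auto. apply finv_Some in E. exfalso. eapply H; eauto.
Qed.

Lemma eventually_fresh (L : list I) : exists N, forall n, N <= n -> ~ In (f n) L.
Proof.
  induction L as [|x L [N IH]].
  - exists 0. intros n _ [].
  - destruct (f_cases x) as [[m <-]|Hx].
    + exists (max N (S m)). intros n Hn [E|E].
      * apply f_inj in E. lia.
      * apply (IH n); auto. lia.
    + exists N. intros n Hn [E|E]; [eapply Hx; eauto|apply (IH n); auto].
Qed.

Definition shift_from (M : nat) (i : I) : I :=
  match finv i with Some n => if Nat.leb M n then f (S n) else i | None => i end.

Definition shift : I -> I := shift_from 0.

Lemma shift_from_ge M n : M <= n -> shift_from M (f n) = f (S n).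
Proof. intros. unfold shift_from. rewrite finv_f. destruct (Nat.leb_spec M n); auto; lia. Qed.

Lemma shift_from_lt M n : n < M -> shift_from M (f n) = f n.
Proof. intros. unfold shift_from. rewrite finv_f. destruct (Nat.leb_spec M n); auto; lia. Qed.

Lemma shift_from_notf M i : (forall n, f n <> i) -> shift_from M i = i.
Proof. intros H. unfold shift_from. now rewrite finv_None. Qed.

Lemma shift_from_inj M : injective (shift_from M).
Proof.
  assert (Hout : forall n j, (forall m, f m <> j) -> shift_from M (f n) <> j).
  { intros n j Hj. destruct (le_lt_dec M n);
      [rewrite shift_from_ge|rewrite shift_from_lt]; auto. }
  intros x y E.
  destruct (f_cases x) as [[n <-]|Hx]; destruct (f_cases y) as [[m <-]|Hy].
  - assert (Hf : forall k, shift_from M (f k) = f (if Nat.leb M k then S k else k)).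
    { intros k. unfold shift_from. rewrite finv_f. now destruct (Nat.leb M k). }
    rewrite !Hf in E. apply f_inj in E. f_equal.
    destruct (Nat.leb_spec M n), (Nat.leb_spec M m); lia.
  - rewrite (shift_from_notf M y Hy) in E. exfalso. eapply Hout; eauto.
  - rewrite (shift_from_notf M x Hx) in E. exfalso. eapply Hout; eauto.
  - now rewrite (shift_from_notf M x Hx), (shift_from_notf M y Hy) in E.
Qed.

Lemma shift_f n : shift (f n) = f (S n).
Proof. apply shift_from_ge. lia. Qed.

Lemma shift_notf i : (forall n, f n <> i) -> shift i = i.
Proof. apply shift_from_notf. Qed.

Lemma shift_inj : injective shift.
Proof. apply shift_from_inj. Qed.

Lemma shift_ne_f0 k : shift k <> f 0.
Proof.
  destruct (f_cases k) as [[n <-]|Hk].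
  - rewrite shift_f. intros E. apply f_inj in E. discriminate.
  - rewrite shift_notf by auto. intros E. now apply (Hk 0).
Qed.

Definition near (b r : I -> I) : Prop := exists L : list I, forall k, ~ In k L -> r k = b k.

(** The two weak spaces [near id] and [near shift]; the invariance condition below only
    constrains sets on their union. *)
Definition weak (r : I -> I) : Prop := near (fun x => x) r \/ near shift r.

Lemma near_variant b r r' (L : list I) :
  near b r -> (forall k, ~ In k L -> r' k = r k) -> near b r'.
Proof.
  intros [L0 H0] H. exists (L ++ L0). intros k Hk.
  rewrite H, H0; auto; intro; apply Hk; apply in_or_app; auto.
Qed.

Lemma near_agree b r r' i : near b r -> (forall j, j <> i -> r' j = r j) -> near b r'.
Proof.
  intros Hr H. apply (near_variant b r r' [i] Hr).
  intros k Hk. apply H. intros ->. apply Hk. now left.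
Qed.

Lemma near_upd b r i u : near b r -> near b (upd r i u).
Proof. intros Hr. apply (near_agree b r _ i Hr). intros j Hj. now apply upd_neq. Qed.

Lemma weak_upd r i u : weak r -> weak (upd r i u).
Proof. intros [H|H]; [left|right]; now apply near_upd. Qed.

Lemma near_near b r r' : near b r -> near b r' -> near r r'.
Proof.
  intros [L1 H1] [L2 H2]. exists (L1 ++ L2). intros k Hk.
  rewrite H1, H2; auto; intro; apply Hk; apply in_or_app; auto.
Qed.

Lemma near_id_shift_disjoint r : near (fun x => x) r -> near shift r -> False.
Proof.
  intros [L1 H1] [L2 H2]. destruct (eventually_fresh (L1 ++ L2)) as [N HN].
  assert (~ In (f N) L1 /\ ~ In (f N) L2) as [A1 A2].
  { split; intro; apply (HN N); auto; apply in_or_app; auto. }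
  specialize (H1 _ A1). specialize (H2 _ A2). rewrite H1, shift_f in H2.
  apply f_inj in H2. lia.
Qed.

Lemma near_nodup b r (extra : list I) : near b r ->
  exists L, NoDup L /\ incl extra L /\ forall k, ~ In k L -> r k = b k.
Proof.
  intros [L HL]. exists (nodup eq_dec_classic (extra ++ L)).
  split; [apply NoDup_nodup|split].
  - intros x Hx. apply nodup_In, in_or_app. auto.
  - intros k Hk. apply HL. intros Hin. apply Hk, nodup_In, in_or_app. auto.
Qed.

Lemma near_id_surjective_image (r : I -> I) L : (forall k, ~ In k L -> r k = k) ->
  surjective r -> incl L (map r L).
Proof.
  intros HL Hs v Hv. destruct (Hs v) as [k <-].
  destruct (classic (In k L)) as [Hk|Hk]; [now apply in_map|].
  rewrite (HL k Hk) in Hv. contradiction.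
Qed.

Lemma near_id_surjective_inj r : near (fun x => x) r -> surjective r -> injective r.
Proof.
  intros Hr Hs a b Eab. apply NNPP. intros Hab.
  destruct (near_nodup _ _ [a; b] Hr) as (L & HN & Hab_in & HL).
  assert (incl L (map r (remove eq_dec_classic b L))) as Hi.
  { intros v Hv. apply (near_id_surjective_image r L HL Hs) in Hv.
    apply in_map_iff in Hv as [c [<- Hc]]. apply in_map_iff.
    destruct (classic (c = b)) as [->|Hcb].
    - exists a. split; auto. apply in_in_remove; auto. apply Hab_in. now left.
    - exists c. split; auto. now apply in_in_remove. }
  apply NoDup_incl_length in Hi; auto. rewrite length_map in Hi.
  pose proof (remove_length_lt eq_dec_classic L b (Hab_in b ltac:(simpl; auto))). lia.
Qed.

Lemma near_id_inj_surjective r : near (fun x => x) r -> injective r -> surjective r.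
Proof.
  intros Hr Hi. destruct (near_nodup _ _ [] Hr) as (L & HN & _ & HL).
  assert (incl (map r L) L) as Hsub.
  { intros v Hv. apply in_map_iff in Hv as [c [<- Hc]].
    apply NNPP. intros Hn. pose proof (HL _ Hn) as E. apply Hi in E. congruence. }
  assert (incl L (map r L)) as Hsup.
  { apply NoDup_length_incl; [now apply Injective_map_NoDup|now rewrite length_map|auto]. }
  intros v. destruct (classic (In v L)) as [Hv|Hv].
  - apply Hsup, in_map_iff in Hv as [c [E _]]. eauto.
  - exists v. now apply HL.
Qed.

Lemma near_shift_not_surjective r : near shift r -> ~ surjective r.
Proof.
  intros Hr Hs. destruct (near_nodup _ _ [] Hr) as (L & HN & _ & HL).
  assert (incl (f 0 :: map shift L) (map r L)) as Hi.
  { intros v Hv. destruct (Hs v) as [k <-].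
    destruct (classic (In k L)) as [Hk|Hk]; [now apply in_map|].
    exfalso. rewrite (HL _ Hk) in Hv. destruct Hv as [Hv|Hv].
    - now apply (shift_ne_f0 k).
    - apply in_map_iff in Hv as [c [Ec Hc]]. apply shift_inj in Ec. congruence. }
  apply NoDup_incl_length in Hi.
  - simpl in Hi. rewrite !length_map in Hi. lia.
  - constructor.
    + intros Hin. apply in_map_iff in Hin as [c [Ec _]]. now apply (shift_ne_f0 c).
    + apply Injective_map_NoDup; auto. exact shift_inj.
Qed.

Lemma weak_spare_value r i : weak r -> exists u, forall c, c <> i -> r c <> u.
Proof.
  intros Hr. destruct (classic (exists c, c <> i /\ r c = r i)) as [[c [Hci Ec]]|Hn].
  - destruct (not_surjective_missing r) as [v Hv]; [|eauto].
    destruct Hr as [Hr|Hr]; [|now apply near_shift_not_surjective].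
    intros Hs. now apply Hci, (near_id_surjective_inj r Hr Hs).
  - exists (r i). intros c Hc E. eauto.
Qed.

Lemma weak_fresh_outside r (G : list I) : weak r ->
  exists k, ~ In k G /\ forall j, In j G -> r k <> r j.
Proof.
  intros Hr.
  assert (exists b, (b = (fun x : I => x) \/ b = shift) /\ near b r) as [b [Hb [L HL]]].
  { destruct Hr as [H|H]; [exists (fun x => x)|exists shift]; auto. }
  destruct (eventually_fresh (G ++ L ++ map r G)) as [N HN].
  assert (Hin : forall n, N <= n -> ~ In (f n) G /\ ~ In (f n) L /\ ~ In (f n) (map r G)).
  { intros n Hn. repeat split; intro; apply (HN n Hn); rewrite !in_app_iff; auto. }
  exists (f N). destruct (Hin N (le_n _)) as (A1 & A2 & A3). split; auto.
  intros j Hj E. rewrite HL in E by auto.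
  destruct Hb as [-> | ->].
  - apply A3. rewrite E. now apply in_map.
  - rewrite shift_f in E. apply (Hin (S N)); [lia|]. rewrite E. now apply in_map.
Qed.

(** ** Types over finite sets of coordinates *)

Section TypeOver.
Variable G : list I.

Definition attained_outside (r : I -> I) (a : I) : Prop := exists k, ~ In k G /\ r k = r a.

Definition dup_outside (r : I -> I) : Prop :=
  exists k1 k2, ~ In k1 G /\ ~ In k2 G /\ k1 <> k2 /\ r k1 = r k2.

Definition same_type (r r' : I -> I) : Prop :=
  (forall a b, In a G -> In b G -> (r a = r b <-> r' a = r' b)) /\
  (forall a, In a G -> (attained_outside r a <-> attained_outside r' a)) /\
  (dup_outside r <-> dup_outside r').

Lemma same_type_sym r r' : same_type r r' -> same_type r' r.
Proof.
  intros (K & O & D). repeat split; intros; try apply K; try apply O; try apply D; auto.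
Qed.

Lemma same_type_upd r r' i u u' : In i G -> same_type r r' ->
  (forall a, In a G -> a <> i -> (r a = u <-> r' a = u')) ->
  ((exists k, ~ In k G /\ r k = u) <-> (exists k, ~ In k G /\ r' k = u')) ->
  same_type (upd r i u) (upd r' i u').
Proof.
  intros Hi (K & O & D) Hval Hout.
  assert (Hoff : forall (s : I -> I) v c, ~ In c G -> upd s i v c = s c).
  { intros s v c Hc. apply upd_neq. intros ->. contradiction. }
  assert (Hatt : forall (s : I -> I) v a, a <> i ->
            attained_outside (upd s i v) a <-> attained_outside s a).
  { intros s v a Ha. unfold attained_outside.
    split; intros [k [Hk Ek]]; exists k; rewrite Hoff, upd_neq in * by auto; auto. }
  assert (Hatt_i : forall (s : I -> I) v,
            attained_outside (upd s i v) i <-> exists k, ~ In k G /\ s k = v).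
  { intros s v. unfold attained_outside. rewrite upd_eq.
    split; intros [k [Hk Ek]]; exists k; rewrite Hoff in *; auto. }
  split; [|split].
  - intros a b Ha Hb.
    destruct (classic (a = i)) as [->|Hai]; destruct (classic (b = i)) as [->|Hbi];
      rewrite ?upd_eq, ?upd_neq by auto.
    + tauto.
    + specialize (Hval b Hb Hbi). split; intros E; symmetry; apply Hval; auto.
    + now apply Hval.
    + now apply K.
  - intros a Ha. destruct (classic (a = i)) as [->|Hai].
    + now rewrite !Hatt_i.
    + rewrite !Hatt by auto. now apply O.
  - assert (Hdup : forall (s : I -> I) v, dup_outside (upd s i v) <-> dup_outside s).
    { intros s v. unfold dup_outside.
      split; intros (k1 & k2 & H1 & H2 & H12 & E); exists k1, k2;
        rewrite !Hoff in * by auto; auto. }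
    now rewrite !Hdup.
Qed.
End TypeOver.
Lemma same_type_incl_half G G' r r' : incl G G' -> same_type G' r r' ->
  (forall a, In a G -> attained_outside G r a -> attained_outside G r' a) /\
  (dup_outside G r -> dup_outside G r').
Proof.
  intros Hi (K & O & D). split.
  - intros a Ha [k [Hk Ek]].
    destruct (classic (In k G')) as [Hk'|Hk'].
    + exists k. split; auto. apply K; auto.
    + destruct (proj1 (O a (Hi a Ha)) (ex_intro _ k (conj Hk' Ek))) as [k' [Hk'' Ek']].
      exists k'. split; auto.
  - intros (k1 & k2 & H1 & H2 & H12 & E12).
    destruct (classic (In k1 G')) as [A1|A1]; destruct (classic (In k2 G')) as [A2|A2].
    + exists k1, k2. repeat split; auto. apply K; auto.
    + destruct (proj1 (O k1 A1) (ex_intro _ k2 (conj A2 (eq_sym E12)))) as [k' [Hk' Ek']].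
      exists k', k1. repeat split; auto. intros ->. contradiction.
    + destruct (proj1 (O k2 A2) (ex_intro _ k1 (conj A1 E12))) as [k' [Hk' Ek']].
      exists k', k2. repeat split; auto. intros ->. contradiction.
    + destruct (proj1 D (ex_intro _ k1 (ex_intro _ k2 (conj A1 (conj A2 (conj H12 E12))))))
        as (x & y & Hx & Hy & Hxy & Exy).
      exists x, y. repeat split; auto.
Qed.

Lemma same_type_incl G G' r r' : incl G G' -> same_type G' r r' -> same_type G r r'.
Proof.
  intros Hi HT.
  destruct (same_type_incl_half _ _ _ _ Hi HT) as [O1 D1].
  destruct (same_type_incl_half _ _ _ _ Hi (same_type_sym _ _ _ HT)) as [O2 D2].
  destruct HT as [K _]. split; [|split].
  - intros a c Ha Hc. apply K; auto.
  - intros a Ha. split; auto.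
  - split; auto.
Qed.

(** The back-and-forth step: the type of a point over [G] determines the possible
    types of its [i]-variants. *)
Lemma same_type_extend G r r' i u : weak r' -> In i G -> same_type G r r' ->
  exists u', same_type G (upd r i u) (upd r' i u').
Proof.
  intros Hr' Hi HT. pose proof HT as (K & O & D).
  destruct (classic (exists j, In j G /\ j <> i /\ r j = u)) as [[j (Hj & Hji & <-)]|NA].
  { exists (r' j). apply same_type_upd; [exact Hi|exact HT| |].
    - intros a Ha Hai. now apply K.
    - exact (O j Hj). }
  destruct (classic (exists k, ~ In k G /\ r k = u)) as [Hk|NB].
  { destruct (weak_fresh_outside r' G Hr') as [k' [Hk' Ek']].
    exists (r' k'). apply same_type_upd; [exact Hi|exact HT| |].
    - intros a Ha Hai. split; intros E; exfalso.
      + apply NA. eauto.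
      + apply (Ek' a Ha). congruence.
    - split; intros _; eauto. }
  destruct (weak_spare_value r' i Hr') as [u' Hu'].
  exists u'. apply same_type_upd; [exact Hi|exact HT| |].
  - intros a Ha Hai. split; intros E; exfalso.
    + apply NA. eauto.
    + exact (Hu' a Hai E).
  - split; intros [k [Hk Ek]]; exfalso.
    + apply NB. eauto.
    + apply (Hu' k); auto. intros ->. contradiction.
Qed.

Section Realize.
Variables (b r : I -> I) (G : list I).

Definition rep (a : I) : I := epsilon (inhabits (f 0)) (fun j => In j G /\ r j = r a).

Definition wit (a : I) : I := epsilon (inhabits (f 0)) (fun k => ~ In k G /\ r k = r a).

Lemma rep_spec a : In a G -> In (rep a) G /\ r (rep a) = r a.
Proof. intros Ha. apply (epsilon_spec (inhabits (f 0)) (fun j => In j G /\ r j = r a)). eauto. Qed.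

Lemma wit_spec a : attained_outside G r a -> ~ In (wit a) G /\ r (wit a) = r a.
Proof.
  intros [k Hk]. apply (epsilon_spec (inhabits (f 0)) (fun k => ~ In k G /\ r k = r a)). eauto.
Qed.

Lemma rep_wit_congr a c : r a = r c -> rep a = rep c /\ wit a = wit c.
Proof. intros E. unfold rep, wit. now rewrite E. Qed.

Variables k1 k2 : I.
Hypothesis b_inj : injective b.
Hypothesis k1_G : ~ In k1 G.
Hypothesis k1_wit : forall a, In a G -> wit a <> k1.
Hypothesis k2_G : ~ In k2 G.
Hypothesis k2_k1 : k2 <> k1.

(** Inside [G] every value is moved to a canonical witness (outside [G] if possible);
    outside [G] the point is the identity, except that [k1] is sent to [k2] when the
    type demands a duplicate outside [G]. *)
Definition realizer_index (k : I) : I :=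
  if dec (In k G) then (if dec (attained_outside G r k) then wit k else rep k)
  else if dec (dup_outside G r /\ k = k1) then k2 else k.

Definition realizer (k : I) : I := b (realizer_index k).

Lemma realizer_index_in a : In a G ->
  realizer_index a = if dec (attained_outside G r a) then wit a else rep a.
Proof. intros Ha. unfold realizer_index. now destruct (dec (In a G)). Qed.

Lemma realizer_index_out k : ~ In k G -> k <> k1 -> realizer_index k = k.
Proof.
  intros Hk Hk1. unfold realizer_index.
  destruct (dec (In k G)); [contradiction|]. destruct (dec (_ /\ _)) as [[_ E]|]; tauto.
Qed.

Lemma realizer_index_k1 : realizer_index k1 = if dec (dup_outside G r) then k2 else k1.
Proof.
  unfold realizer_index. destruct (dec (In k1 G)); [contradiction|].
  destruct (dec (_ /\ _)), (dec (dup_outside G r)); tauto.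
Qed.

Lemma realizer_index_in_G a : In a G -> ~ attained_outside G r a -> In (realizer_index a) G.
Proof.
  intros Ha Na. rewrite realizer_index_in by auto.
  destruct (dec _); [contradiction|]. now apply rep_spec.
Qed.

Lemma attained_outside_congr a c : r a = r c ->
  (attained_outside G r a <-> attained_outside G r c).
Proof. intros E. unfold attained_outside. now rewrite E. Qed.

Lemma realizer_eq_in a c : In a G -> In c G ->
  (r a = r c <-> realizer a = realizer c).
Proof.
  intros Ha Hc. unfold realizer. rewrite !realizer_index_in by auto. split.
  - intros E. destruct (rep_wit_congr a c E) as [-> ->].
    destruct (dec (attained_outside G r a)) as [Oa|Oa], (dec (attained_outside G r c)) as [Oc|Oc];
      auto; exfalso; [apply Oc|apply Oa]; apply (attained_outside_congr a c E); auto.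
  - destruct (dec (attained_outside G r a)) as [Oa|Oa], (dec (attained_outside G r c)) as [Oc|Oc];
      intros E; apply b_inj in E.
    + destruct (wit_spec a Oa) as [_ Ea], (wit_spec c Oc) as [_ Ec]. congruence.
    + exfalso. destruct (wit_spec a Oa) as [Wa _], (rep_spec c Hc) as [Rc _]. congruence.
    + exfalso. destruct (wit_spec c Oc) as [Wc _], (rep_spec a Ha) as [Ra _]. congruence.
    + destruct (rep_spec a Ha) as [_ Ea], (rep_spec c Hc) as [_ Ec]. congruence.
Qed.

Lemma realizer_attained a : In a G ->
  (attained_outside G r a <-> attained_outside G realizer a).
Proof.
  intros Ha. unfold attained_outside, realizer. split.
  - intros Oa. destruct (wit_spec a Oa) as [Wa Ea]. exists (wit a). split; auto.
    rewrite (realizer_index_in a Ha), realizer_index_out by auto.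
    now destruct (dec _).
  - intros [k [Hk Ek]]. apply NNPP. intros Na. apply b_inj in Ek.
    pose proof (realizer_index_in_G a Ha Na) as Hin. rewrite <- Ek in Hin.
    destruct (classic (k = k1)) as [->|Hkk].
    + rewrite realizer_index_k1 in Hin. destruct (dec _); contradiction.
    + rewrite realizer_index_out in Hin; auto.
Qed.

Lemma realizer_dup : dup_outside G r <-> dup_outside G realizer.
Proof.
  unfold realizer. split.
  - intros Hd. exists k1, k2. repeat split; auto.
    rewrite realizer_index_k1, realizer_index_out by auto. now destruct (dec _).
  - intros (x & y & Hx & Hy & Hxy & Exy). apply NNPP. intros Hd.
    assert (forall k, ~ In k G -> realizer_index k = k) as Hr.
    { intros k Hk. destruct (classic (k = k1)) as [->|Hkk].
      - rewrite realizer_index_k1. now destruct (dec _).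
      - now apply realizer_index_out. }
    apply b_inj in Exy. rewrite !Hr in Exy by auto. contradiction.
Qed.

Lemma realizer_same_type : same_type G r realizer.
Proof.
  split; [|split].
  - apply realizer_eq_in.
  - apply realizer_attained.
  - apply realizer_dup.
Qed.

Lemma realizer_near : near b realizer.
Proof.
  exists (k1 :: G). intros k Hk. unfold realizer.
  rewrite realizer_index_out; auto; intros E; apply Hk; [right|left]; auto.
Qed.

End Realize.

Lemma same_type_realize b r G : injective b -> exists r', near b r' /\ same_type G r r'.
Proof.
  intros Hb.
  destruct (eventually_fresh (G ++ map (wit r G) G)) as [N1 HN1].
  destruct (eventually_fresh (f N1 :: G)) as [N2 HN2].
  assert (H1 : ~ In (f N1) (G ++ map (wit r G) G)) by (apply HN1; lia).
  assert (H2 : ~ In (f N2) (f N1 :: G)) by (apply HN2; lia).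
  rewrite in_app_iff in H1. simpl in H2.
  exists (realizer b r G (f N1) (f N2)). split.
  - apply realizer_near; tauto.
  - apply realizer_same_type; auto; try tauto.
    intros a Ha E. apply H1. right. rewrite <- E. now apply in_map.
Qed.

(** ** Invariant sets *)

Definition invariant_over (G : list I) (X : (I -> I) -> Prop) : Prop :=
  forall r r', weak r -> weak r' -> same_type G r r' -> (X r <-> X r').

Definition invariant (X : (I -> I) -> Prop) : Prop := exists G, invariant_over G X.

Lemma invariant_over_incl G G' X : incl G G' -> invariant_over G X -> invariant_over G' X.
Proof. intros Hi HX r r' Hr Hr' HT. apply HX; auto. now apply (same_type_incl G G'). Qed.

Lemma invariant_over_app_l G G' X : invariant_over G X -> invariant_over (G ++ G') X.
Proof. apply invariant_over_incl. intros x Hx. apply in_or_app. auto. Qed.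

Lemma invariant_over_app_r G G' X : invariant_over G' X -> invariant_over (G ++ G') X.
Proof. apply invariant_over_incl. intros x Hx. apply in_or_app. auto. Qed.

Lemma invariant_combine (F : Prop -> Prop -> Prop) X Y :
  (forall P P' Q Q', (P <-> P') -> (Q <-> Q') -> (F P Q <-> F P' Q')) ->
  invariant X -> invariant Y -> invariant (fun r => F (X r) (Y r)).
Proof.
  intros HF [G1 H1] [G2 H2]. exists (G1 ++ G2). intros r r' Hr Hr' HT.
  apply HF; [apply (invariant_over_app_l G1 G2 X H1)|apply (invariant_over_app_r G1 G2 Y H2)]; auto.
Qed.

Lemma invariant_over_cyl_half G X i r r' : invariant_over G X ->
  weak r -> weak r' -> same_type (i :: G) r r' -> set_cyl i X r -> set_cyl i X r'.
Proof.
  intros HX Hr Hr' HT [t [Ht Et]]. rewrite (upd_agree t r i Et) in Ht.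
  destruct (same_type_extend (i :: G) r r' i (t i) Hr' (or_introl eq_refl) HT) as [u' Hu'].
  exists (upd r' i u'). split.
  - apply (HX (upd r i (t i))); auto using weak_upd.
    apply (same_type_incl G (i :: G)); auto. intros x Hx. now right.
  - intros j Hj. now apply upd_neq.
Qed.

Lemma invariant_subuniverse : subuniverse (fullCs I I) invariant.
Proof.
  split; [|split; [|split; [|split; [|split; [|split]]]]].
  - intros x y Hx Hy. apply (invariant_combine or); auto. tauto.
  - intros x y Hx Hy. apply (invariant_combine and); auto. tauto.
  - intros x [G H]. exists G. intros r r' Hr Hr' HT. simpl. rewrite (H r r' Hr Hr' HT). tauto.
  - exists []. intros r r' _ _ _. simpl. tauto.
  - exists []. intros r r' _ _ _. simpl. tauto.
  - intros i x [G H]. exists (i :: G). intros r r' Hr Hr' HT. simpl.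
    split; apply (invariant_over_cyl_half G); auto. now apply same_type_sym.
  - intros i j. exists [i; j]. intros r r' Hr Hr' [K _]. simpl. apply K; simpl; auto.
Qed.

Lemma invariant_xor X Y : invariant X -> invariant Y -> invariant (fun r => ~ (X r <-> Y r)).
Proof. apply (invariant_combine (fun P Q => ~ (P <-> Q))). tauto. Qed.

Definition weak_inj (r : I -> I) : Prop := weak r /\ injective r.

Lemma invariant_weak_inj : invariant weak_inj.
Proof.
  exists []. intros r r' Hr Hr' (_ & _ & D).
  assert (E : forall s, injective s <-> ~ dup_outside [] s).
  { intros s. split.
    - intros Hs (k1 & k2 & _ & _ & H12 & E12). auto.
    - intros Hs x y Exy. apply NNPP. intros Hxy. apply Hs. exists x, y. auto. }
  unfold weak_inj. rewrite !E. tauto.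
Qed.

Lemma invariant_realize b X r : injective b -> (forall r', near b r' -> weak r') ->
  invariant X -> X r -> weak r -> exists r', X r' /\ near b r'.
Proof.
  intros Hb Hw [G HX] Hr Hwr.
  destruct (same_type_realize b r G Hb) as [r' [Hn HT]].
  exists r'. split; auto. apply (HX r r'); auto.
Qed.

Lemma invariant_meets_near_id X r : invariant X -> X r -> weak r ->
  exists r', X r' /\ near (fun x => x) r'.
Proof. apply invariant_realize; [now intros x y|now left]. Qed.

Lemma invariant_meets_near_shift X r : invariant X -> X r -> weak r ->
  exists r', X r' /\ near shift r'.
Proof. apply invariant_realize; [exact shift_inj|now right]. Qed.

Lemma invariant_in_near_shift_empty X : invariant X -> (forall r, X r -> near shift r) ->
  forall r, ~ X r.
Proof.
  intros HX Hsh r Hr.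
  destruct (invariant_meets_near_id X r HX Hr (or_intror (Hsh r Hr))) as [r' [Hr' Hn]].
  exact (near_id_shift_disjoint r' Hn (Hsh r' Hr')).
Qed.

(** ** Twisting by a permutation of the base *)

Definition swap (i : I) : I :=
  match finv i with Some n => f (if Nat.even n then S n else pred n) | None => i end.

Lemma swap_f n : swap (f n) = f (if Nat.even n then S n else pred n).
Proof. unfold swap. now rewrite finv_f. Qed.

Lemma swap_notf i : (forall n, f n <> i) -> swap i = i.
Proof. intros H. unfold swap. now rewrite finv_None. Qed.

Lemma swap_involutive i : swap (swap i) = i.
Proof.
  destruct (f_cases i) as [[n <-]|Hn].
  - rewrite !swap_f. f_equal. destruct (Nat.even n) eqn:E.
    + now rewrite Nat.even_succ, <- Nat.negb_even, E.
    + destruct n as [|n]; [discriminate|]. simpl pred.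
      rewrite Nat.even_succ, <- Nat.negb_even in E.
      destruct (Nat.even n); [reflexivity|discriminate].
  - rewrite (swap_notf i Hn). now apply swap_notf.
Qed.

Lemma swap_inj : injective swap.
Proof. intros x y E. now rewrite <- (swap_involutive x), <- (swap_involutive y), E. Qed.

Lemma swap_f_neq m : swap (f m) <> f m.
Proof.
  rewrite swap_f. intros E. apply f_inj in E. destruct (Nat.even m) eqn:Ev; [lia|].
  destruct m; [discriminate|]. simpl in E. lia.
Qed.

Lemma swap_near_shift_not_weak r : near shift r -> ~ weak (fun k => swap (r k)).
Proof.
  intros [L2 H2] [[L1 H1]|[L1 H1]];
    destruct (eventually_fresh (L1 ++ L2)) as [N HN];
    assert (A : forall n, N <= n -> ~ In (f n) L1 /\ ~ In (f n) L2)
      by (intros n Hn; split; intro; apply (HN n Hn); apply in_or_app; auto).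
  - destruct (A (S (2 * N))) as [A1 A2]; [lia|].
    specialize (H1 _ A1). rewrite H2, shift_f, swap_f in H1 by auto.
    replace (Nat.even (S (S (2 * N)))) with true in H1.
    + apply f_inj in H1. lia.
    + symmetry. rewrite Nat.even_succ_succ. apply Nat.even_spec. exists N. lia.
  - destruct (A N (le_n _)) as [A1 A2]. specialize (H1 _ A1).
    rewrite H2, shift_f in H1 by auto. now apply (swap_f_neq (S N)).
Qed.

Definition twist (r : I -> I) : I -> I :=
  if dec (near shift r) then (fun k => swap (r k)) else r.

Definition twist_pre (X : (I -> I) -> Prop) : (I -> I) -> Prop := fun r => X (twist r).

Lemma twist_pre_hom : hom (fullCs I I) (fullCs I I) twist_pre.
Proof.
  repeat split; intros; apply set_ext; intro r; unfold twist_pre, twist; simpl.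
  - unfold set_cyl. destruct (dec (near shift r)) as [Hr|Hr]; split.
    + intros [t [Ht Et]].
      assert (Hc : near shift (fun k => swap (t k))).
      { apply (near_agree shift r _ i Hr). intros j Hj. now rewrite Et, swap_involutive. }
      exists (fun k => swap (t k)). split.
      * destruct (dec _) as [_|]; [|contradiction].
        replace (fun k => swap (swap (t k))) with t; auto.
        apply functional_extensionality; intro. now rewrite swap_involutive.
      * intros j Hj. now rewrite Et, swap_involutive.
    + intros [t [Ht Et]].
      assert (Hc : near shift t) by (apply (near_agree shift r t i); auto).
      destruct (dec (near shift t)) as [_|]; [|contradiction].
      exists (fun k => swap (t k)). split; auto. intros j Hj. now rewrite Et.
    + intros [t [Ht Et]]. exists t. split; auto.
      destruct (dec (near shift t)) as [Hc|Hc]; auto. exfalso. apply Hr.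
      apply (near_agree shift t r i Hc). intros j Hj. now rewrite Et.
    + intros [t [Ht Et]]. exists t. split; auto.
      destruct (dec (near shift t)) as [Hc|Hc]; auto. exfalso. apply Hr.
      apply (near_agree shift t r i Hc). intros j Hj. now rewrite Et.
  - destruct (dec (near shift r)); split; intros E; auto.
    + now apply swap_inj.
    + now rewrite E.
Qed.

Lemma twist_pre_inj_invariant X Y :
  invariant X -> invariant Y -> twist_pre X = twist_pre Y -> X = Y.
Proof.
  intros HX HY E. apply set_ext. intro r. apply NNPP. revert r.
  apply (invariant_in_near_shift_empty _ (invariant_xor X Y HX HY)).
  intros r Hr. apply NNPP. intros Hc. apply Hr.
  assert (twist_pre X r <-> twist_pre Y r) as Q by (rewrite E; tauto).
  unfold twist_pre, twist in Q. now destruct (dec (near shift r)).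
Qed.

Lemma near_id_upd_not_inj r i u : near (fun x => x) r -> injective r -> u <> r i ->
  ~ injective (upd r i u).
Proof.
  intros Hn Hr Hu Hi. destruct (near_id_inj_surjective r Hn Hr u) as [k Ek].
  assert (k <> i) as Hk by (intros ->; auto).
  assert (upd r i u i = upd r i u k) as E by (rewrite upd_eq, upd_neq; auto).
  apply Hi in E. auto.
Qed.

Lemma weak_inj_spare_iff r i : weak_inj r ->
  (exists u, u <> r i /\ weak_inj (upd r i u)) <-> near shift r.
Proof.
  intros [Hw Hr]. split.
  - intros [u [Hu [_ Hr']]]. destruct Hw as [H0|H1]; auto.
    exfalso. exact (near_id_upd_not_inj r i u H0 Hr Hu Hr').
  - intros H1. destruct (not_surjective_missing r (near_shift_not_surjective r H1)) as [v Hv].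
    exists v. split; [intros E; now apply (Hv i)|]. split; [now apply weak_upd|].
    intros a b E.
    destruct (classic (a = i)) as [->|Ha]; destruct (classic (b = i)) as [->|Hb]; auto;
      rewrite ?upd_eq, ?upd_neq in E by auto.
    + exfalso. now apply (Hv b).
    + exfalso. now apply (Hv a).
    + now apply Hr.
Qed.

Lemma twist_weak_inj_no_spare r i :
  ~ (twist_pre weak_inj r /\ exists u, u <> r i /\ twist_pre weak_inj (upd r i u)).
Proof.
  unfold twist_pre, twist. intros [H [u [Hu H']]].
  destruct (dec (near shift r)) as [Hr|Hr].
  - exact (swap_near_shift_not_weak r Hr (proj1 H)).
  - destruct (dec (near shift (upd r i u))) as [Hr'|Hr'].
    + apply Hr, (near_agree shift (upd r i u) r i Hr'). intros j Hj. now rewrite upd_neq.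
    + destruct H as [[H0|H1] Hi]; [|contradiction].
      exact (near_id_upd_not_inj r i u H0 Hi Hu (proj2 H')).
Qed.

(** ** Tail shifts *)

Definition triple_at (M : nat) (r : I -> I) : Prop :=
  r (f (S M)) = r (f M) /\ r (f (S (S M))) = r (f M).

Lemma near_id_shift_from M r : near (fun x => x) r -> near shift (fun k => r (shift_from M k)).
Proof.
  intros [L HL]. destruct (eventually_fresh L) as [K0 HK0].
  exists (L ++ map f (seq 0 (M + K0))). intros k Hk.
  destruct (f_cases k) as [[n <-]|Hn].
  - assert (M + K0 <= n) as Hn.
    { destruct (le_lt_dec (M + K0) n); auto. exfalso. apply Hk, in_or_app. right.
      apply in_map, in_seq. lia. }
    rewrite shift_from_ge, shift_f by lia. apply HL, HK0. lia.
  - rewrite shift_from_notf, shift_notf by auto. apply HL. intro. apply Hk, in_or_app. auto.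
Qed.

(** The repeated value at [f M], [f (S M)], [f (S (S M))] keeps a duplicate outside [G]
    after the shift, while the point itself moves to the other weak space. *)
Lemma same_type_shift_from G M r : (forall n, M <= n -> ~ In (f n) G) ->
  near (fun x => x) r -> triple_at M r -> same_type G r (fun k => r (shift_from M k)).
Proof.
  intros HG Hr [T1 T2].
  assert (fixG : forall a, In a G -> shift_from M a = a).
  { intros a Ha. destruct (f_cases a) as [[n <-]|Hn].
    - destruct (le_lt_dec M n); [exfalso; eapply HG; eauto|]. now apply shift_from_lt.
    - now apply shift_from_notf. }
  assert (outG : forall k, ~ In k G -> ~ In (shift_from M k) G).
  { intros k Hk. destruct (f_cases k) as [[n <-]|Hn].
    - destruct (le_lt_dec M n).
      + rewrite shift_from_ge by auto. apply HG. lia.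
      + now rewrite shift_from_lt.
    - now rewrite shift_from_notf. }
  split; [|split].
  - intros a b Ha Hb. rewrite !fixG by auto. tauto.
  - intros a Ha. unfold attained_outside. rewrite (fixG a Ha). split.
    + intros [k [Hk Ek]]. destruct (f_cases k) as [[n <-]|Hn].
      * destruct (lt_eq_lt_dec n M) as [[Hl|<-]|Hg].
        -- exists (f n). split; auto. now rewrite shift_from_lt.
        -- exists (f n). split; auto. rewrite shift_from_ge by lia. congruence.
        -- exists (f (pred n)). split; [apply HG; lia|]. rewrite shift_from_ge by lia.
           now replace (S (pred n)) with n by lia.
      * exists k. split; auto. now rewrite shift_from_notf.
    + intros [k [Hk Ek]]. exists (shift_from M k). auto.
  - unfold dup_outside. split; intros _;
      exists (f M), (f (S M)); repeat split; try (apply HG; lia);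
      try (intros E; apply f_inj in E; lia).
    + rewrite !shift_from_ge by lia. congruence.
    + congruence.
Qed.

Lemma near_set_cyl_list (L : list I) (X : (I -> I) -> Prop) b r :
  (forall p, X p -> near b p) -> set_cyl_list L X r -> near b r.
Proof.
  revert r. induction L as [|x L IH]; intros r HX Hr; simpl in *; auto.
  destruct Hr as [t [Ht Et]]. apply (near_agree b t r x).
  - now apply IH.
  - intros j Hj. symmetry. auto.
Qed.

Definition shift_from_ext (M : nat) (c : I + nat) : I + nat :=
  match c with inl i => inl (shift_from M i) | inr n => inr n end.

Definition coord_bound (c : I + nat) : nat :=
  match c with inl i => match finv i with Some n => S n | None => 0 end | inr _ => 0 end.

Lemma shift_from_ext_fix M c : coord_bound c <= M -> shift_from_ext M c = c.
Proof.
  destruct c as [i|n]; simpl; auto. intros H. f_equal.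
  destruct (f_cases i) as [[n <-]|Hn].
  - rewrite finv_f in H. apply shift_from_lt. lia.
  - now apply shift_from_notf.
Qed.

Lemma shift_from_ext_fixed_pre M c d : coord_bound c <= M -> shift_from_ext M d = c -> d = c.
Proof.
  intros Hc E. destruct d as [j|n], c as [i|m]; simpl in *; try discriminate; auto.
  injection E as E. f_equal.
  destruct (f_cases j) as [[n <-]|Hn].
  - destruct (le_lt_dec M n).
    + rewrite shift_from_ge in E by auto. subst. rewrite finv_f in Hc. lia.
    + now rewrite shift_from_lt in E.
  - now rewrite shift_from_notf in E.
Qed.

Lemma upd_shift_from_ext M (s : I + nat -> I) c u : coord_bound c <= M ->
  (fun d => upd s c u (shift_from_ext M d)) = upd (fun d => s (shift_from_ext M d)) c u.
Proof.
  intros Hc. apply functional_extensionality; intro d.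
  destruct (classic (d = c)) as [->|Hd].
  - now rewrite shift_from_ext_fix, !upd_eq.
  - rewrite !upd_neq; auto. intros E. now apply Hd, (shift_from_ext_fixed_pre M c d).
Qed.

Lemma near_inl_upd b (s : I + nat -> I) c u :
  near b (fun i => s (inl i)) -> near b (fun i => upd s c u (inl i)).
Proof.
  intros H. apply (near_variant b _ _ (match c with inl j => [j] | inr _ => [] end) H).
  intros k Hk. apply upd_neq. destruct c as [j|n]; [|discriminate].
  intros E. injection E as ->. apply Hk. now left.
Qed.

Lemma triple_at_inl_upd M (s : I + nat -> I) c u : coord_bound c <= M ->
  triple_at M (fun i => s (inl i)) -> triple_at M (fun i => upd s c u (inl i)).
Proof.
  intros Hc [T1 T2].
  assert (forall n, M <= n -> upd s c u (inl (f n)) = s (inl (f n))) as K.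
  { intros n Hn. apply upd_neq. intros E. subst c. simpl in Hc. rewrite finv_f in Hc. lia. }
  unfold triple_at. rewrite !K by lia. auto.
Qed.

Definition tail_invariant (b : (I + nat -> I) -> Prop) : Prop :=
  exists N, forall M, N <= M -> forall s,
    near (fun x => x) (fun i => s (inl i)) -> triple_at M (fun i => s (inl i)) ->
    (b s <-> b (fun c => s (shift_from_ext M c))).

Lemma nr_embed_tail_invariant X : invariant X -> tail_invariant (nr_embed X).
Proof.
  intros [G HX]. destruct (eventually_fresh G) as [N HN].
  exists N. intros M HM s Hn Ht. unfold nr_embed. simpl.
  apply HX; [now left|right; exact (near_id_shift_from M _ Hn)|].
  apply (same_type_shift_from G M (fun i => s (inl i))); auto. intros n Hn'. apply HN. lia.
Qed.

Lemma set_cyl_tail_invariant c X : tail_invariant X -> tail_invariant (set_cyl c X).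
Proof.
  intros [N HX]. exists (max N (coord_bound c)). intros M HM s Hn Ht.
  assert (HXu : forall u, X (upd s c u) <-> X (upd (fun d => s (shift_from_ext M d)) c u)).
  { intros u. rewrite <- upd_shift_from_ext by lia.
    apply HX; [lia|apply near_inl_upd, Hn|apply triple_at_inl_upd; auto; lia]. }
  simpl. split; intros [t [Ht' Et]]; rewrite (upd_agree t _ c Et) in Ht'.
  - exists (upd (fun d => s (shift_from_ext M d)) c (t c)).
    split; [now apply HXu|intros j Hj; now rewrite upd_neq].
  - exists (upd s c (t c)). split; [now apply HXu|intros j Hj; now apply upd_neq].
Qed.

Lemma Gen_tail_invariant (Gs : ((I + nat -> I) -> Prop) -> Prop) :
  (forall b, Gs b -> tail_invariant b) -> forall b, Gen Gs b -> tail_invariant b.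
Proof.
  intros HGs b Hb. induction Hb as [x Hx|x y _ [N1 H1] _ [N2 H2]|x y _ [N1 H1] _ [N2 H2]
    |x _ [N1 H1]| | |c x _ IH|c d].
  - auto.
  - exists (max N1 N2). intros M HM s Hn Ht. simpl. rewrite (H1 M), (H2 M); auto; try tauto; lia.
  - exists (max N1 N2). intros M HM s Hn Ht. simpl. rewrite (H1 M), (H2 M); auto; try tauto; lia.
  - exists N1. intros M HM s Hn Ht. simpl. rewrite (H1 M); auto; tauto.
  - exists 0. intros; simpl; tauto.
  - exists 0. intros; simpl; tauto.
  - now apply set_cyl_tail_invariant.
  - exists (max (coord_bound c) (coord_bound d)). intros M HM s Hn Ht. simpl.
    rewrite !shift_from_ext_fix by lia. tauto.
Qed.

Definition finite_variants (X : (I -> I) -> Prop) (r : I -> I) : Prop :=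
  exists p L, X p /\ forall k, ~ In k L -> r k = p k.

Lemma finite_variants_incl X r : X r -> finite_variants X r.
Proof. intros Hr. now exists r, []. Qed.

Lemma set_cyl_finite_variants i X : set_cyl i (finite_variants X) = finite_variants X.
Proof.
  apply set_ext. intros r. split.
  - intros [t [[p [L [Hp Ep]]] Et]]. exists p, (i :: L). split; auto. intros k Hk.
    rewrite <- Et by (intros ->; apply Hk; now left). apply Ep. intros Hin. apply Hk. now right.
  - intros Hr. now exists r.
Qed.

(** An invariant set meets both weak spaces as soon as it meets one, so the finite
    variants of its points fill the same part of both. *)
Lemma invariant_finite_variants X : invariant X -> invariant (finite_variants X).
Proof.
  intros HX. exists [].
  assert (K : forall r r', weak r -> weak r' -> finite_variants X r -> finite_variants X r').
  { intros r r' Hr Hr' [p [L [Hp Ep]]].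
    assert (weak p) as Hwp.
    { destruct Hr as [Hr|Hr]; [left|right]; apply (near_variant _ r p L Hr);
        intros k Hk; symmetry; auto. }
    destruct (invariant_meets_near_id X p HX Hp Hwp) as [r0 [X0 N0]].
    destruct (invariant_meets_near_shift X p HX Hp Hwp) as [r1 [X1 N1]].
    destruct Hr' as [Hr'|Hr'].
    - destruct (near_near _ _ _ N0 Hr') as [L' HL']. now exists r0, L'.
    - destruct (near_near _ _ _ N1 Hr') as [L' HL']. now exists r1, L'. }
  intros r r' Hr Hr' _. split; apply K; auto.
Qed.

Lemma finite_variants_meet_cyl_list X Y r : finite_variants X r -> Y r ->
  exists L, set_cyl_list L X r /\ set_cyl_list L Y r.
Proof.
  intros [p [L [Hp Ep]]] Hr. exists L.
  split; [now apply (set_cyl_list_variant L X p r)|now apply (set_cyl_list_variant L Y r r)].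
Qed.

Definition inj_id_part (r : I -> I) : Prop := weak_inj r /\ ~ near shift r.

Definition inj_shift_part (r : I -> I) : Prop := weak_inj r /\ near shift r.

Lemma inj_id_part_id : inj_id_part (fun x => x).
Proof.
  assert (near (fun x => x) (fun x => x)) as H0 by now exists [].
  split; [split; [now left|now intros x y]|].
  intros H1. exact (near_id_shift_disjoint _ H0 H1).
Qed.

Lemma inj_shift_part_shift : inj_shift_part shift.
Proof.
  split; [split|].
  - right. now exists [].
  - exact shift_inj.
  - now exists [].
Qed.

Lemma inj_parts_cyl_list_disjoint L r :
  set_cyl_list L inj_id_part r -> set_cyl_list L inj_shift_part r -> False.
Proof.
  intros H0 H1. apply (near_id_shift_disjoint r).
  - apply (near_set_cyl_list L inj_id_part _ r); auto.
    intros p [[[Hp|Hp] _] Hn]; [auto|contradiction].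
  - apply (near_set_cyl_list L inj_shift_part _ r); auto. intros p [_ Hp]; auto.
Qed.

(** Collapse [f N], [f (S N)], [f (S (S N))] in the identity; the tail shift of the
    result is a finite variant of [shift]. *)
Lemma tail_invariant_reaches_shift Z : (forall r i u, Z r -> Z (upd r i u)) ->
  Z (fun x => x) -> tail_invariant (nr_embed Z) -> Z shift.
Proof.
  intros Zupd Zid [N HN].
  set (r0 := upd (upd (fun x : I => x) (f (S N)) (f N)) (f (S (S N))) (f N)).
  assert (ne : forall a b, a <> b -> f a <> f b) by (intros a b Hab E; now apply Hab, f_inj).
  assert (Nr0 : near (fun x => x) r0) by (now apply near_upd, near_upd; exists []).
  assert (Tr0 : triple_at N r0).
  { unfold triple_at, r0. rewrite upd_neq by (apply ne; lia). rewrite upd_eq.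
    rewrite (upd_neq _ (f (S (S N))) _ (f N)) by (apply ne; lia).
    rewrite (upd_neq _ (f (S N)) _ (f N)) by (apply ne; lia). now rewrite upd_eq. }
  assert (Zsh : Z (fun i => r0 (shift_from N i))).
  { apply (HN N (le_n _) (fun c => match c with inl i => r0 i | inr _ => f 0 end));
      auto. unfold nr_embed. now apply Zupd, Zupd. }
  destruct (near_id_shift_from N r0 Nr0) as [L HL].
  apply (upd_closed_variant Z Zupd L _ _ Zsh). intros k Hk. symmetry. now apply HL.
Qed.

End WeakSpaces.

(** * The counterexamples *)

Section Construction.
Variable I : Type.
Variable f : nat -> I.
Hypothesis f_inj : injective f.

Definition A : CAType I := SubCA (fullCs I I) (invariant I f) (invariant_subuniverse I f f_inj).

Definition aval : A -> (I -> I) -> Prop := sval _ _ _.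

Definition B_gens (b : (I + nat -> I) -> Prop) : Prop := exists x : A, nr_embed (aval x) = b.

Definition B : CAType (I + nat) := SgCA B_gens.

Definition bval : B -> (I + nat -> I) -> Prop := sval _ _ _.

Lemma bval_hom : hom B (fullCs _ _) bval.
Proof. apply sval_hom. Qed.

Definition eA (x : A) : B :=
  smk (fullCs _ _) (Gen B_gens) (Gen_subuniverse _) (nr_embed (aval x))
    (Gen_base _ _ (ex_intro _ x eq_refl)).

Definition B'_gens (b : (I + nat -> I) -> Prop) : Prop :=
  exists x : A, nr_embed (twist_pre I f (aval x)) = b.

Definition B' : CAType (I + nat) := SgCA B'_gens.

Definition eA' (x : A) : B' :=
  smk (fullCs _ _) (Gen B'_gens) (Gen_subuniverse _) (nr_embed (twist_pre I f (aval x)))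
    (Gen_base _ _ (ex_intro _ x eq_refl)).

Lemma eA_gen_subreduct : gen_subreduct A B eA.
Proof.
  split.
  - apply (embeds_Nr_SgCA (f 0) A aval); [apply sval_hom|apply sval_inj|reflexivity].
  - apply SgCA_generates. intros b [x <-]. exists (eA x). eauto.
Qed.

Lemma eA'_gen_subreduct : gen_subreduct A B' eA'.
Proof.
  split.
  - apply (embeds_Nr_SgCA (f 0) A (fun x => twist_pre I f (aval x))); [| |reflexivity].
    + apply (hom_comp A (fullCs I I) (fullCs I I) aval (twist_pre I f)).
      * apply sval_hom.
      * now apply twist_pre_hom.
    + intros x y E. apply sval_inj. apply (twist_pre_inj_invariant I f f_inj); auto; apply sval_P.
  - apply SgCA_generates. intros b [x <-]. exists (eA' x). eauto.
Qed.

Definition weak_inj_A : A :=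
  smk (fullCs I I) (invariant I f) _ (weak_inj I f) (invariant_weak_inj I f).

(** In [B] this term denotes the injective points of [near shift]; the same term
    vanishes in [B'] (see [varies_eA'_zero]). *)
Definition inj_shift_elt : B := varies B (f 0) (eA weak_inj_A).

Lemma bval_inj_shift_elt s : bval inj_shift_elt s <-> inj_shift_part I f (fun i => s (inl i)).
Proof.
  unfold inj_shift_elt. rewrite (hom_varies B (fullCs (I + nat) I) bval _ _ bval_hom).
  change (bval (eA weak_inj_A)) with (nr_embed (weak_inj I f)). rewrite varies_nr_embed.
  unfold inj_shift_part. simpl. split.
  - intros [H1 H2]. split; auto. now apply (weak_inj_spare_iff I f f_inj _ (f 0) H1).
  - intros [H1 H2]. split; auto. now apply (weak_inj_spare_iff I f f_inj _ (f 0) H1).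
Qed.

Lemma inj_shift_elt_nonzero : inj_shift_elt <> zero B.
Proof.
  intros E.
  assert (H : bval inj_shift_elt (fun c => match c with inl i => shift I f i | inr _ => f 0 end))
    by (apply bval_inj_shift_elt, inj_shift_part_shift; exact f_inj).
  rewrite E in H. exact H.
Qed.

Definition near_shift_ideal (b : B) : Prop :=
  forall s, bval b s -> near I (shift I f) (fun i => s (inl i)).

Lemma near_shift_ideal_is_ideal : is_ideal B near_shift_ideal.
Proof.
  unfold near_shift_ideal, bval. split; [|split; [|split]].
  - intros s [].
  - intros x z Hx Hz s [Hs|Hs]; auto.
  - intros x z Hxz Hz s Hs. unfold leq in Hxz. rewrite <- Hxz in Hs. apply Hz, Hs.
  - intros i x Hx s [t [Ht Et]]. apply Hx in Ht.
    apply (near_agree I _ (fun j => t (inl j)) _ (match i with inl j => j | inr _ => f 0 end));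
      auto.
    intros j Hj. symmetry. apply Et. destruct i; [intros E; injection E; auto|discriminate].
Qed.

Lemma part_ii : ~ (forall b, Ig B (fun x => near_shift_ideal x /\ exists a, eA a = x) b <->
                             near_shift_ideal b).
Proof.
  intros H. apply inj_shift_elt_nonzero.
  assert (Hy : near_shift_ideal inj_shift_elt)
    by (intros s Hs; apply bval_inj_shift_elt in Hs; apply Hs).
  apply H in Hy. apply (Hy _ (zero_ideal_set_subalgebra _ _)).
  intros x [Hx [a <-]]. apply sval_inj, set_ext. intros s. split; [|contradiction].
  apply (invariant_in_near_shift_empty I f f_inj (aval a) (sval_P _ _ _ a)).
  intros r Hr. exact (Hx (fun c => match c with inl i => r i | inr _ => f 0 end) Hr).
Qed.

Lemma varies_eA'_zero : varies B' (f 0) (eA' weak_inj_A) = zero B'.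
Proof.
  apply sval_inj. rewrite (hom_varies B' (fullCs (I + nat) I) _ _ _ (sval_hom _ _ _)).
  apply set_ext. intros s.
  change (varies (fullCs (I + nat) I) (f 0) (nr_embed (twist_pre I f (weak_inj I f))) s <-> False).
  rewrite varies_nr_embed. split; [|contradiction].
  exact (twist_weak_inj_no_spare I f f_inj _ (f 0)).
Qed.

Lemma part_iii : ~ exists ib : B -> B', iso B B' ib /\ forall a, ib (eA a) = eA' a.
Proof.
  intros [ib [[Hib [Hinj _]] Hc]]. apply inj_shift_elt_nonzero, Hinj.
  unfold inj_shift_elt. rewrite (hom_varies _ _ _ _ _ Hib), Hc, varies_eA'_zero.
  symmetry. apply Hib.
Qed.


Definition in_Nr_B (X : (I -> I) -> Prop) : Prop := Gen B_gens (nr_embed X).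

Lemma in_Nr_B_subuniverse : subuniverse (fullCs I I) in_Nr_B.
Proof.
  destruct (@nr_embed_hom I I) as (Ej & Em & Ec & E0 & E1 & Ecy & Ed).
  unfold in_Nr_B. repeat split; intros.
  - rewrite Ej. now apply Gen_join.
  - rewrite Em. now apply Gen_meet.
  - rewrite Ec. now apply Gen_compl.
  - rewrite E0. apply Gen_zero.
  - rewrite E1. apply Gen_one.
  - rewrite Ecy. now apply Gen_cyl.
  - rewrite Ed. apply Gen_diag.
Qed.

(** [A2] is (a set-algebra copy of) the whole neat reduct of [B]. *)
Definition A2 : CAType I := SubCA (fullCs I I) in_Nr_B in_Nr_B_subuniverse.

Definition a2val : A2 -> (I -> I) -> Prop := sval _ _ _.

Definition e2 (x : A2) : B :=
  smk (fullCs _ _) (Gen B_gens) (Gen_subuniverse _) (nr_embed (a2val x)) (sval_P _ _ _ x).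

Lemma e2_gen_subreduct : gen_subreduct A2 B e2.
Proof.
  split.
  - apply (embeds_Nr_SgCA (f 0) A2 a2val); [apply sval_hom|apply sval_inj|reflexivity].
  - apply SgCA_generates. intros b [x <-].
    exists (e2 (smk (fullCs I I) in_Nr_B _ (aval x) (Gen_base _ _ (ex_intro _ x eq_refl)))). eauto.
Qed.

Lemma A_zd_separation : zd_separation A.
Proof.
  intros w1 w2 _ _ Sep.
  set (ZA := invariant_finite_variants I f f_inj (aval w1) (sval_P _ _ _ w1)).
  exists (smk (fullCs I I) (invariant I f) _ _ ZA). split; [|split].
  - intros i. apply sval_inj. apply set_cyl_finite_variants.
  - apply sval_inj, set_ext. intros r. simpl.
    split; [tauto|]. intros Hr. split; auto. now apply finite_variants_incl.
  - apply sval_inj, set_ext. intros r. simpl. split; [|contradiction].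
    intros [H2 H1]. destruct (finite_variants_meet_cyl_list I _ _ _ H1 H2) as [L HL].
    change (aval (zero A) r). rewrite <- (Sep L).
    change (aval (cyl_list A L w1) r /\ aval (cyl_list A L w2) r).
    unfold aval, A. now rewrite !sval_cyl_list.
Qed.

Lemma in_Nr_B_inj_shift_part : in_Nr_B (inj_shift_part I f).
Proof.
  unfold in_Nr_B. replace (nr_embed (inj_shift_part I f)) with (bval inj_shift_elt).
  { exact (sval_P _ _ _ inj_shift_elt). }
  apply set_ext. intros s. apply bval_inj_shift_elt.
Qed.

Lemma in_Nr_B_inj_id_part : in_Nr_B (inj_id_part I f).
Proof.
  unfold in_Nr_B.
  replace (nr_embed (inj_id_part I f))
    with (meet (fullCs _ _) (nr_embed (weak_inj I f)) (compl (fullCs _ _) (bval inj_shift_elt))).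
  - apply Gen_meet.
    + apply Gen_base. now exists weak_inj_A.
    + apply Gen_compl. exact (sval_P _ _ _ inj_shift_elt).
  - apply set_ext. intros s.
    change ((nr_embed (weak_inj I f) s /\ ~ bval inj_shift_elt s) <-> nr_embed (inj_id_part I f) s).
    rewrite bval_inj_shift_elt. unfold inj_shift_part, inj_id_part, nr_embed.
    tauto.
Qed.

Lemma A2_not_zd_separation : ~ zd_separation A2.
Proof.
  intros HP.
  set (w1 := smk (fullCs I I) in_Nr_B in_Nr_B_subuniverse _ in_Nr_B_inj_id_part).
  set (w2 := smk (fullCs I I) in_Nr_B in_Nr_B_subuniverse _ in_Nr_B_inj_shift_part).
  destruct (HP w1 w2) as [z (Z1 & Z2 & Z3)].
  - intros E. apply (f_equal (fun x => a2val x (fun i => i))) in E. simpl in E.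
    rewrite <- E. now apply inj_id_part_id.
  - intros E. apply (f_equal (fun x => a2val x (shift I f))) in E. simpl in E.
    rewrite <- E. now apply inj_shift_part_shift.
  - intros L. apply sval_inj, set_ext. intros r.
    change (a2val (cyl_list A2 L w1) r /\ a2val (cyl_list A2 L w2) r <-> False).
    unfold a2val, A2. rewrite !sval_cyl_list.
    split; [|contradiction]. intros [H1 H2].
    exact (inj_parts_cyl_list_disjoint I f f_inj L r H1 H2).
  - set (Z := a2val z).
    assert (Zupd : forall r i u, Z r -> Z (upd r i u)).
    { intros r i u Hr. unfold Z. rewrite <- (Z1 i). exists r. split; auto.
      intros j Hj. now rewrite upd_neq. }
    assert (Zid : Z (fun x => x)).
    { assert (H : a2val w1 (fun x => x)) by exact (inj_id_part_id I f f_inj).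
      unfold leq in Z2. rewrite <- Z2 in H. exact (proj2 H). }
    change (a2val (zero A2) (shift I f)). rewrite <- Z3.
    split; [exact (inj_shift_part_shift I f f_inj)|].
    apply (tail_invariant_reaches_shift I f f_inj Z Zupd Zid).
    apply (Gen_tail_invariant I f f_inj B_gens); [|exact (sval_P _ _ _ z)].
    intros b [x <-]. apply nr_embed_tail_invariant; [exact f_inj|exact (sval_P _ _ _ x)].
Qed.

Lemma part_i : ~ isomorphic A A2.
Proof.
  intros [phi Hphi]. apply A2_not_zd_separation.
  exact (zd_separation_iso A A2 phi Hphi A_zd_separation).
Qed.

End Construction.


Theorem mainTheorem14 (I : Type) (Hinf : exists f : nat -> I, injective f) :
  (* (i) *)
  (exists (B : CAType (I + nat)) (A A' : CAType I) (e : A -> B) (e' : A' -> B),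
      is_CA B /\ is_RCA A /\ is_RCA A' /\ is_CA A /\ is_CA A' /\
      gen_subreduct A B e /\ gen_subreduct A' B e' /\ ~ isomorphic A A') /\
  (* (ii) *)
  (exists (A : CAType I) (B : CAType (I + nat)) (e : A -> B) (J : B -> Prop),
      is_RCA A /\ is_CA A /\ is_CA B /\ gen_subreduct A B e /\ is_ideal B J /\
      ~ (forall b, Ig B (fun x => J x /\ exists a, e a = x) b <-> J b)) /\
  (* (iii) *)
  (exists (A A' : CAType I) (B B' : CAType (I + nat)) (eA : A -> B) (eA' : A' -> B')
          (i : A -> A'),
      is_RCA A /\ is_RCA A' /\ is_CA A /\ is_CA A' /\ is_CA B /\ is_CA B' /\
      gen_subreduct A B eA /\ gen_subreduct A' B' eA' /\
      iso A A' i /\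
      ~ exists ib : B -> B', iso B B' ib /\ forall a, ib (eA a) = eA' (i a)).
Proof.
  destruct Hinf as [f Hf].
  assert (CA_A : is_CA (A I f Hf)) by apply SubCA_is_CA, fullCs_is_CA.
  assert (CA_A2 : is_CA (A2 I f Hf)) by apply SubCA_is_CA, fullCs_is_CA.
  assert (RCA_A : is_RCA (A I f Hf)) by apply subalgebra_fullCs_is_RCA.
  assert (RCA_A2 : is_RCA (A2 I f Hf)) by apply subalgebra_fullCs_is_RCA.
  split; [|split].
  - exists (B I f Hf), (A I f Hf), (A2 I f Hf), (eA I f Hf), (e2 I f Hf).
    exact (conj (SgCA_is_CA _) (conj RCA_A (conj RCA_A2 (conj CA_A (conj CA_A2
      (conj (eA_gen_subreduct I f Hf) (conj (e2_gen_subreduct I f Hf) (part_i I f Hf)))))))).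
  - exists (A I f Hf), (B I f Hf), (eA I f Hf), (near_shift_ideal I f Hf).
    exact (conj RCA_A (conj CA_A (conj (SgCA_is_CA _) (conj (eA_gen_subreduct I f Hf)
      (conj (near_shift_ideal_is_ideal I f Hf) (part_ii I f Hf)))))).
  - exists (A I f Hf), (A I f Hf), (B I f Hf), (B' I f Hf), (eA I f Hf), (eA' I f Hf), (fun x => x).
    exact (conj RCA_A (conj RCA_A (conj CA_A (conj CA_A (conj (SgCA_is_CA _) (conj (SgCA_is_CA _)
      (conj (eA_gen_subreduct I f Hf) (conj (eA'_gen_subreduct I f Hf)
      (conj (iso_id _) (part_iii I f Hf)))))))))).
Qed.
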